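(* Let agent $i\in[A]$ satisfy condition (M). Then for every initial condition $X(0)\in\mathbb{N}^A$, $$\prod_{j\ne i}\exp\Big\{-F_j(X_j(0))\sum_{k=X_i(0)}^{\infty}\frac{1}{F_i(k)}\Big\}\;\le\;\mathbb{P}(tMon_i)\;\le\;\prod_{j\ne i}\exp\Big\{-c\,F_j(X_j(0))\sum_{k=X_i(0)}^{\infty}\frac{1}{F_i(k)}\Big\},$$ where $$c:=\inf_{k\in\mathbb{N}_0}\frac{F_i(X_i(0)+k)}{F_i(X_i(0)+k)+\sum_{j\ne i}F_j(X_j(0))}>0 .$$
   Context: Fix $A\ge 2$, $[A]=\{1,\dots,A\}$, and feedback functions $F_i:\mathbb{N}=\{1,2,\dots\}\to(0,\infty)$, $i\in[A]$. The generalized Pólya urn is the Markov chain $X(n)=(X_1(n),\dots,X_A(n))$, $n\in\mathbb{N}_0$, on $\mathbb{N}^A$ with initial condition $X(0)$ (all $X_i(0)\ge1$) and transition probabilities $\mathbb{P}(X(n+1)=X(n)+e^{(i)}\mid X(n))=F_i(X_i(n))/\sum_{j=1}^AF_j(X_j(n))$, where $e^{(i)}$ is the $i$-th unit vector. Total monopoly of agent $i$ is the event $tMon_i=\{\forall n\ge0\ \forall j\ne i: X_j(n)=X_j(0)\}$. Agent $i$ satisfies condition (M) if $\sum_{k=1}^\infty 1/F_i(k)<\infty$. *)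

From HB Require Import structures.
From mathcomp Require Import all_boot all_order all_algebra.
From mathcomp Require Import all_classical all_reals all_analysis.
Set Implicit Arguments. Unset Strict Implicit. Unset Printing Implicit Defensive.
Import Order.TTheory GRing.Theory Num.Theory.
Local Open Scope ring_scope.
Local Open Scope classical_set_scope.

Notation urn_state A := {ffun 'I_A -> nat}.

Definition urn_bump (A : nat) (x : urn_state A) (i : 'I_A) : urn_state A :=
  [ffun j => x j + (j == i)%N].

Definition urn_trans (R : realType) (A : nat) (F : 'I_A -> nat -> R)
    (x y : urn_state A) : R :=
  \sum_(i < A) (if y == urn_bump x i
                then F i (x i) / \sum_(j < A) F j (x j) else 0).

(* X is (a realisation on the probability space (T,P) of) the generalized
   Polya urn with feedback functions F and deterministic initial condition x0:
   the events {X n = y} are measurable, X 0 = x0 almost surely, and the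
   finite-dimensional laws are given by the transition probabilities
   (this is the Markov property with the prescribed transition kernel). *)
Definition is_polya_urn (d : measure_display) (T : measurableType d)
    (R : realType) (P : probability T R) (A : nat) (F : 'I_A -> nat -> R)
    (x0 : urn_state A) (X : nat -> T -> urn_state A) : Prop :=
  [/\ (forall n y, measurable [set w | X n w = y]),
      P [set w | X 0%N w = x0] = 1%E &
      (forall (n : nat) (path : nat -> urn_state A),
          P [set w | forall m, (m <= n.+1)%N -> X m w = path m]
          = (P [set w | forall m, (m <= n)%N -> X m w = path m]
             * (urn_trans F (path n) (path n.+1))%:E)%E)].

Definition tMon (T : Type) (A : nat) (X : nat -> T -> urn_state A) (i : 'I_A)
  : set T :=
  [set w | forall (n : nat) (j : 'I_A), j != i -> X n w j = X 0%N w j].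

Definition condM (R : realType) (f : nat -> R) : Prop :=
  (\sum_(1 <= k <oo) ((f k)^-1)%:E < +oo)%E.

Definition tail_inv_sum (R : realType) (f : nat -> R) (m : nat) : R :=
  (\big[+%R/0%R]_(m <= k <oo) (f k)^-1)%R.

From HB Require Import structures.
From mathcomp Require Import all_boot all_order all_algebra.
From mathcomp Require Import all_classical all_reals all_analysis.
From mathcomp Require Import ring lra zify.
Import Order.TTheory GRing.Theory Num.Theory.
Local Open Scope ring_scope.
Local Open Scope classical_set_scope.
Import numFieldNormedType.Exports.
Set Implicit Arguments. Unset Strict Implicit. Unset Printing Implicit Defensive.

(* Let [p m] be the state reached from [x0] after [m] draws, all by agent [i], and
   [r m = F_i(x0_i + m) / (F_i(x0_i + m) + S)] with [S = sum_(j != i) F_j(x0_j)] the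
   probability of drawing [i] in state [p m].  Up to a null set, the total monopoly
   of [i] is the event that the urn runs through [p 0, p 1, ...] forever, so
   [P(tMon_i) = prod_m r m]: each partial product bounds it from above, and the
   decreasing limit of the prefix events from below.  For [f = F_i(x0_i + m)] the
   elementary bounds [expR (- S / f) <= f / (f + S) <= expR (- c S / f)] turn the
   product into the stated exponentials, the sum of [1 / f] being finite by (M). *)

Lemma expR_le_ratio (R : realType) (f S : R) : 0 < f -> 0 <= S ->
  expR (- (S / f)) <= f / (f + S).
Proof.
move=> f_gt0 S_ge0.
(* [f + S = f * (1 + S / f) <= f * expR (S / f)]. *)
have expR_inv : expR (- (S / f)) * expR (S / f) = 1 by rewrite -expRD addNr expR0.
rewrite ler_pdivlMr; last lra.
have -> : f + S = f * (1 + S / f) by field; rewrite gt_eqF.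
rewrite mulrA [_ * f]mulrC -mulrA -[leRHS]mulr1 ler_pM2l //.
by rewrite -[leRHS]expR_inv ler_pM2l ?expR_gt0 ?expR_ge1Dx.
Qed.

(* [f / (f + S) = 1 - S / (f + S) <= expR (- (S / (f + S)))], and
   [S / (f + S) = S / f * (f / (f + S)) >= S / f * c]. *)
Lemma ratio_le_expR (R : realType) (f S c : R) : 0 < f -> 0 <= S ->
  c <= f / (f + S) -> f / (f + S) <= expR (- (c * S / f)).
Proof.
move=> f_gt0 S_ge0 c_le.
have fS_gt0 : 0 < f + S by lra.
have ratioE : f / (f + S) = 1 + - (S / (f + S)) by field; rewrite gt_eqF.
rewrite ratioE; apply: le_trans (expR_ge1Dx _) _.
rewrite ler_expR lerN2.
have -> : S / (f + S) = S / f * (f / (f + S)) by field; rewrite ?gt_eqF.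
have -> : c * S / f = S / f * c by ring.
have := divr_ge0 S_ge0 (ltW f_gt0); nra.
Qed.

Section ratio_products.
Variables (R : realType) (h : nat -> R) (S : R).
Hypotheses (h_gt0 : forall k, 0 < h k) (S_ge0 : 0 <= S).

Lemma expR_le_prod_ratio n :
  expR (- (S * \sum_(m < n) (h m)^-1)) <= \prod_(m < n) (h m / (h m + S)).
Proof.
rewrite mulr_sumr -sumrN expR_sum; apply: ler_prod => m _.
by rewrite expR_ge0 expR_le_ratio.
Qed.

Lemma prod_ratio_le_expR (c : R) n : (forall k, c <= h k / (h k + S)) ->
  \prod_(m < n) (h m / (h m + S)) <= expR (- (c * S * \sum_(m < n) (h m)^-1)).
Proof.
move=> c_le; rewrite mulr_sumr -sumrN expR_sum; apply: ler_prod => m _.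
rewrite ratio_le_expR // andbT divr_ge0 ?ltW //.
by rewrite ltr_wpDr.
Qed.

Lemma inf_ratio_le k :
  inf [set h k / (h k + S) | k in [set: nat]] <= h k / (h k + S).
Proof.
apply: ge_inf; last by exists k.
by exists 0 => _ [j _ <-]; rewrite divr_ge0 ?ltW ?ltr_wpDr.
Qed.

End ratio_products.

(* Each ratio is [1 / (1 + S / h k)] and hence at least [1 / (1 + S * B)]. *)
Lemma inf_ratio_gt0 (R : realType) (h : nat -> R) (S B : R) :
  (forall k, 0 < h k) -> 0 <= S -> (forall k, (h k)^-1 <= B) ->
  0 < inf [set h k / (h k + S) | k in [set: nat]].
Proof.
move=> h_gt0 S_ge0 inv_le.
have B_ge0 : 0 <= B by apply: le_trans (inv_le 0%N); rewrite invr_ge0 ltW.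
have bound_gt0 : 0 < (1 + S * B)^-1 by rewrite invr_gt0; nra.
apply: lt_le_trans bound_gt0 _; apply: lb_le_inf; first by exists (h 0%N / (h 0%N + S)), 0%N.
move=> _ [k _ <-]; have hk := h_gt0 k.
have hkB : 1 <= h k * B by rewrite -(mulfV (lt0r_neq0 hk)) ler_pM2l.
rewrite ler_pdivlMr; last nra.
rewrite mulrC ler_pdivrMr; nra.
Qed.

Section tail_inv_sum.
Variables (R : realType) (f : nat -> R) (m : nat).
Hypotheses (m_gt0 : (0 < m)%N) (f_gt0 : forall k, (0 < k)%N -> 0 < f k).
Hypothesis f_condM : condM f.

Let s N := \sum_(m <= k < N) (f k)^-1.

Let partial_sumE n : \sum_(k < n) (f (m + k)%N)^-1 = s (n + m)%N.
Proof.
under eq_bigr do rewrite addnC.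
by rewrite /s (big_addn 0 (n + m) m) addnK big_mkord.
Qed.

Let s_nondecreasing : nondecreasing_seq s.
Proof.
apply/nondecreasing_seqP => n; rewrite /s.
have [mn|nm] := leqP m n; last by rewrite !big_geq ?(ltnW nm).
by rewrite big_nat_recr //= lerDl invr_ge0 ltW // f_gt0 // (leq_trans m_gt0).
Qed.

Let s_bounded : has_ubound (range s).
Proof.
have inv_ge0 k : (1 <= k)%N -> (0 <= ((f k)^-1)%:E)%E.
  by move=> k1; rewrite lee_fin invr_ge0 ltW // f_gt0.
have series_fin : (\sum_(1 <= k <oo) ((f k)^-1)%:E)%E \is a fin_num.
  by rewrite ge0_fin_numE // nneseries_ge0 // => k k1 _; exact: inv_ge0.
exists (fine (\sum_(1 <= k <oo) ((f k)^-1)%:E)%E) => _ [N _ <-].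
rewrite -lee_fin fineK // /s -sumEFin (nneseries_split _ (m - 1)) //.
rewrite add1n subn1 prednK //.
apply: le_trans (_ : (\sum_(m <= k <oo) ((f k)^-1)%:E)%E <= _)%E.
  by apply: nneseries_lim_ge => k mk _; rewrite inv_ge0 // (leq_trans m_gt0).
rewrite leeDr // sumEFin lee_fin big_nat_cond sumr_ge0 // => k /andP[/andP[k1 _] _].
by rewrite invr_ge0 ltW // f_gt0.
Qed.

Let s_cvg : cvgn s.
Proof. exact: nondecreasing_is_cvgn. Qed.

Lemma partial_le_tail_inv_sum n :
  \sum_(k < n) (f (m + k)%N)^-1 <= tail_inv_sum f m.
Proof. by rewrite partial_sumE; exact: nondecreasing_cvgn_le. Qed.

Lemma inv_le_tail_inv_sum k : (f (m + k)%N)^-1 <= tail_inv_sum f m.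
Proof.
apply: le_trans (partial_le_tail_inv_sum k.+1).
by rewrite big_ord_recr lerDr sumr_ge0 // => j _; rewrite invr_ge0 ltW ?f_gt0 ?addn_gt0 ?m_gt0.
Qed.

Lemma partial_cvg_tail_inv_sum :
  (fun n => \sum_(k < n) (f (m + k)%N)^-1) @ \oo --> tail_inv_sum f m.
Proof.
have -> : (fun n => \sum_(k < n) (f (m + k)%N)^-1) = [sequence s (n + m)%N]_n.
  by apply: funext => n; rewrite partial_sumE.
by rewrite cvg_shiftn.
Qed.

End tail_inv_sum.

Lemma urn_bump_inj (A : nat) (x : urn_state A) : injective (urn_bump x).
Proof.
move=> k l /(congr1 (fun y : urn_state A => y k)) /eqP.
by rewrite /urn_bump !ffunE eqxx eqn_add2l eq_sym => /eqP; case: eqP.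
Qed.

Lemma urn_trans_bump (R : realType) (A : nat) (F : 'I_A -> nat -> R)
    (x : urn_state A) k :
  urn_trans F x (urn_bump x k) = F k (x k) / \sum_(j < A) F j (x j).
Proof.
rewrite /urn_trans (bigD1 k) //= eqxx [X in _ + X]big1 ?addr0 // => l lk.
by case: eqP => // /urn_bump_inj kl; rewrite kl eqxx in lk.
Qed.

Lemma sum_urn_trans_bump (R : realType) (A : nat) (F : 'I_A -> nat -> R)
    (x : urn_state A) :
  \sum_(j < A) F j (x j) != 0 -> \sum_(k < A) urn_trans F x (urn_bump x k) = 1.
Proof.
by move=> sum_neq0; under eq_bigr do rewrite urn_trans_bump; rewrite -mulr_suml mulfV.
Qed.

Definition monopoly_path (A : nat) (x0 : urn_state A) (i : 'I_A) (m : nat) : urn_state A :=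
  [ffun j => (x0 j + (if j == i then m else 0))%N].

Lemma monopoly_path0 (A : nat) (x0 : urn_state A) i : monopoly_path x0 i 0 = x0.
Proof. by apply/ffunP => j; rewrite ffunE; case: ifP; rewrite addn0. Qed.

Lemma monopoly_pathS (A : nat) (x0 : urn_state A) i m :
  monopoly_path x0 i m.+1 = urn_bump (monopoly_path x0 i m) i.
Proof. by apply/ffunP => j; rewrite !ffunE; case: (j == i) => /=; lia. Qed.

Lemma monopoly_path_self (A : nat) (x0 : urn_state A) i m :
  monopoly_path x0 i m i = (x0 i + m)%N.
Proof. by rewrite ffunE eqxx. Qed.

Lemma monopoly_path_other (A : nat) (x0 : urn_state A) i m j :
  j != i -> monopoly_path x0 i m j = x0 j.
Proof. by move=> ji; rewrite ffunE (negbTE ji) addn0. Qed.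

(* Countably many states: the event is the union over all pairs of states. *)
Lemma measurable_state_rel (A : nat) (d : measure_display) (T : measurableType d)
    (X : nat -> T -> urn_state A) :
  (forall n y, measurable [set w | X n w = y]) ->
  forall (Q : urn_state A -> urn_state A -> Prop) n m,
  measurable [set w | Q (X n w) (X m w)].
Proof.
move=> measurable_X Q n m.
have -> : [set w | Q (X n w) (X m w)] = \bigcup_(yz : urn_state A * urn_state A)
    ([set _ | Q yz.1 yz.2] `&` ([set w | X n w = yz.1] `&` [set w | X m w = yz.2])).
  apply/seteqP; split => [w q|w [yz _ [/= q [-> ->]]]] //.
  by exists (X n w, X m w).
apply: countable_bigcupT_measurable; first exact: countableP.
move=> yz; apply: measurableI; last exact: measurableI.
have [q|nq] := pselect (Q yz.1 yz.2).
  by rewrite (_ : [set _ | _] = setT) //; apply/seteqP; split.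
by rewrite (_ : [set _ | _] = set0) //; apply/seteqP; split.
Qed.

Lemma probability_setD_eq0 d (T : measurableType d) (R : realType)
    (P : probability T R) (A B : set T) :
  measurable A -> measurable B -> B `<=` A -> P B = P A -> P (A `\` B) = 0%E.
Proof.
move=> mA mB BA PBA.
have PA_lty : (P A < +oo)%E := le_lt_trans (probability_le1 P mA) (ltry 1).
have PA_fin : P A \is a fin_num by rewrite ge0_fin_numE.
rewrite measureD ?setIidr //.
(* [measureD] sees [P] through another coercion, so [PBA] is used up to conversion. *)
exact: eq_trans (congr1 (fun x => P A - x)%E PBA) (subee PA_fin).
Qed.

Lemma le_lim_EFin (R : realType) (x : \bar R) (u : nat -> R) (l : R) :
  u @ \oo --> l -> (forall n, x <= (u n)%:E)%E -> (x <= l%:E)%E.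
Proof.
move=> u_cvg x_le.
have EFin_cvg : (EFin \o u) @ \oo --> l%:E by apply: cvg_comp u_cvg _.
rewrite -(cvg_lim _ EFin_cvg) //.
by apply: lime_ge; [apply/cvg_ex; exists l%:E | exact: nearW].
Qed.

Section monopoly_probability.
Variables (A : nat) (R : realType) (F : 'I_A -> nat -> R) (i : 'I_A).
Variables (d : measure_display) (T : measurableType d) (P : probability T R).
Variables (x0 : urn_state A) (X : nat -> T -> urn_state A).
Hypotheses (F_gt0 : forall j k, (0 < k)%N -> 0 < F j k) (x0_gt0 : forall j, (0 < x0 j)%N).
Hypothesis X_urn : is_polya_urn P F x0 X.

Local Notation p := (monopoly_path x0 i).
Local Notation S := (\sum_(j < A | j != i) F j (x0 j)).
Local Notation ratio m := (F i (x0 i + m)%N / (F i (x0 i + m)%N + S)).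

Definition monopoly_prefix n := [set w | forall m, (m <= n)%N -> X m w = p m].

Definition monopoly_step n k := monopoly_prefix n `&` [set w | X n.+1 w = urn_bump (p n) k].

Let measurable_X n y : measurable [set w | X n w = y].
Proof. by case: X_urn. Qed.

Lemma sum_F_monopoly_path m : \sum_(j < A) F j (p m j) = F i (x0 i + m)%N + S.
Proof.
rewrite (bigD1 i) //= monopoly_path_self; congr (_ + _).
by apply: eq_bigr => j ji; rewrite monopoly_path_other.
Qed.

Lemma sum_F_monopoly_path_gt0 m : 0 < \sum_(j < A) F j (p m j).
Proof.
rewrite sum_F_monopoly_path ltr_wpDr ?F_gt0 ?addn_gt0 ?x0_gt0 //.
by rewrite sumr_ge0 // => j _; rewrite ltW ?F_gt0.
Qed.

Lemma urn_trans_monopoly_path m : urn_trans F (p m) (p m.+1) = ratio m.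
Proof. by rewrite monopoly_pathS urn_trans_bump sum_F_monopoly_path monopoly_path_self. Qed.

Lemma measurable_monopoly_prefix n : measurable (monopoly_prefix n).
Proof.
rewrite (_ : monopoly_prefix n = \bigcap_m [set w | (m <= n)%N -> X m w = p m]).
  apply: bigcapT_measurable => m.
  exact: (measurable_state_rel measurable_X (fun y _ => (m <= n)%N -> y = p m) m m).
by apply/seteqP; split => w /= h m; [move=> _|]; apply: h.
Qed.

Lemma measurable_monopoly_step n k : measurable (monopoly_step n k).
Proof. exact: measurableI (measurable_monopoly_prefix n) (measurable_X _ _). Qed.

Lemma measurable_tMon : measurable (tMon X i).
Proof.
rewrite (_ : tMon X i = \bigcap_m [set w | forall j, j != i -> X m w j = X 0%N w j]).
  apply: bigcapT_measurable => m.
  exact: (measurable_state_rel measurable_X (fun y z => forall j, j != i -> y j = z j) m 0).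
by apply/seteqP; split => w /= h m; [move=> _|]; apply: h.
Qed.

Lemma prob_monopoly_prefix n : P (monopoly_prefix n) = (\prod_(m < n) ratio m)%:E.
Proof.
elim: n => [|n IH].
  rewrite big_ord0 (_ : monopoly_prefix 0 = [set w | X 0%N w = x0]); first by case: X_urn.
  apply/seteqP; split => w /= h; first by rewrite -(monopoly_path0 x0 i) h.
  by move=> m; rewrite leqn0 => /eqP ->; rewrite monopoly_path0.
case: X_urn => _ _ /(_ n p) ->.
by rewrite -/(monopoly_prefix n) IH urn_trans_monopoly_path big_ord_recr /= EFinM.
Qed.

Let prob_monopoly_prefix_lty n : (P (monopoly_prefix n) < +oo)%E.
Proof. by rewrite prob_monopoly_prefix ltry. Qed.

Lemma prob_monopoly_step n k :
  P (monopoly_step n k)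
  = (P (monopoly_prefix n) * (urn_trans F (p n) (urn_bump (p n) k))%:E)%E.
Proof.
pose q m := if m == n.+1 then urn_bump (p n) k else p m.
have q_prefix m : (m <= n)%N -> q m = p m.
  by move=> mn; rewrite /q (_ : (m == n.+1) = false) // ltn_eqF // ltnS.
have qSn : q n.+1 = urn_bump (p n) k by rewrite /q eqxx.
case: X_urn => _ _ /(_ n q); rewrite qSn (q_prefix n (leqnn n)).
have -> : [set w | forall m, (m <= n)%N -> X m w = q m] = monopoly_prefix n.
  by apply/seteqP; split => w h m mn; [rewrite -q_prefix ?h | rewrite q_prefix ?h].
suff -> : [set w | forall m, (m <= n.+1)%N -> X m w = q m] = monopoly_step n k by [].
apply/seteqP; split => w /=.
  by move=> h; split => [m mn|/=]; [rewrite -q_prefix ?h // leqW | rewrite -qSn h].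
move=> [h hn] m; rewrite leq_eqVlt => /orP[/eqP ->|]; first by rewrite qSn.
by rewrite ltnS => mn; rewrite q_prefix // h.
Qed.

(* The steps partition [monopoly_prefix n] up to a null set, because the transition
   probabilities out of [p n] to its [A] neighbours sum to one. *)
Lemma monopoly_prefix_step_negligible n :
  P.-negligible (monopoly_prefix n `\` \big[setU/set0]_(k < A) monopoly_step n k).
Proof.
have measurable_steps : measurable (\big[setU/set0]_(k < A) monopoly_step n k).
  by apply: bigsetU_measurable => k _; exact: measurable_monopoly_step.
apply/negligibleP; first exact: measurableD (measurable_monopoly_prefix n) _.
have prob_steps : P (\big[setU/set0]_(k < A) monopoly_step n k) = P (monopoly_prefix n).
  rewrite measure_bigsetU_ord_cond //; last 2 first.
  - by move=> k _; exact: measurable_monopoly_step.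
  - move=> k l _ _ [w [[_ wk] [_ wl]]].
    by apply: (@urn_bump_inj _ (p n)); rewrite -wk -wl.
  rewrite (eq_bigr (fun k =>
      ((\prod_(m < n) ratio m) * urn_trans F (p n) (urn_bump (p n) k))%:E)); last first.
    by move=> k _; rewrite EFinM -prob_monopoly_prefix; exact: prob_monopoly_step.
  rewrite sumEFin -mulr_sumr sum_urn_trans_bump ?mulr1 ?prob_monopoly_prefix //.
  exact: lt0r_neq0 (sum_F_monopoly_path_gt0 n).
apply: probability_setD_eq0 prob_steps => //; first exact: measurable_monopoly_prefix.
by rewrite -bigcup_seq; apply: bigcup_sub => k _; exact: subIsetl.
Qed.

Lemma tMon_monopoly_prefix_negligible n : P.-negligible (tMon X i `\` monopoly_prefix n).
Proof.
elim: n => [|n IH].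
  apply: (negligibleS (A := ~` [set w | X 0%N w = x0])).
    by move=> w [_ h] h0; apply: h => m; rewrite leqn0 => /eqP ->; rewrite monopoly_path0.
  apply/negligibleP; first exact: measurableC.
  rewrite -setTD; apply: probability_setD_eq0 => //.
  by case: X_urn => _ -> _; exact/esym/probability_setT.
apply: negligibleS (negligibleU IH (monopoly_prefix_step_negligible n)).
move=> w [w_mon w_notprefix].
have [w_prefix|] := pselect (monopoly_prefix n w); last by left; split.
right; split => //; rewrite -bigcup_seq => -[k _ [_ wk]].
have [ki|ki] := eqVneq k i.
  apply: w_notprefix => m; rewrite leq_eqVlt => /orP[/eqP ->|]; last exact: w_prefix.
  by rewrite wk ki monopoly_pathS.
have := w_mon n.+1 k ki; rewrite wk (w_prefix 0%N (leq0n _)) /urn_bump ffunE eqxx.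
by rewrite !monopoly_path_other //; lia.
Qed.

Lemma prob_tMon_le_prod n : (P (tMon X i) <= (\prod_(m < n) ratio m)%:E)%E.
Proof.
have measurable_prefix := measurable_monopoly_prefix n.
rewrite (measureDI P measurable_tMon measurable_prefix) -prob_monopoly_prefix.
rewrite (measure_negligible (measurableD measurable_tMon measurable_prefix)
  (tMon_monopoly_prefix_negligible n)) add0e.
apply: le_measure; rewrite ?inE.
- exact: measurableI measurable_tMon measurable_prefix.
- exact: measurable_prefix.
- exact: subIsetr.
Qed.

Lemma prod_le_prob_tMon b : (forall n, b <= \prod_(m < n) ratio m) ->
  (b%:E <= P (tMon X i))%E.
Proof.
move=> b_le.
have measurable_cap : measurable (\bigcap_n monopoly_prefix n).
  by apply: bigcapT_measurable => n; exact: measurable_monopoly_prefix.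
have prob_cvg : (P \o monopoly_prefix) @ \oo --> P (\bigcap_n monopoly_prefix n).
  apply: nonincreasing_cvg_mu => //.
  - exact: prob_monopoly_prefix_lty.
  - exact: measurable_monopoly_prefix.
  - by move=> m n mn; apply/subsetPset => w h k kn; apply: h; exact: leq_trans mn.
apply: le_trans (_ : P (\bigcap_n monopoly_prefix n) <= _)%E; last first.
  apply: le_measure; rewrite ?inE //; first exact: measurable_tMon.
  move=> w h n j ji.
  by rewrite (h n I n (leqnn _)) (h 0%N I 0%N (leqnn _)) !monopoly_path_other.
rewrite -(cvg_lim _ prob_cvg) //.
apply: lime_ge; first by apply/cvg_ex; eexists; exact: prob_cvg.
by apply: nearW => n; rewrite /= prob_monopoly_prefix lee_fin.
Qed.

End monopoly_probability.

Theorem mainTheorem1 (A : nat) (hA : (2 <= A)%N) (R : realType)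
    (F : 'I_A -> nat -> R) (hF : forall j k, (0 < k)%N -> 0 < F j k)
    (i : 'I_A) (hM : condM (F i))
    (d : measure_display) (T : measurableType d) (P : probability T R)
    (x0 : urn_state A) (hx0 : forall j, (0 < x0 j)%N)
    (X : nat -> T -> urn_state A) (hX : is_polya_urn P F x0 X) :
  let S := \sum_(j < A | j != i) F j (x0 j) in
  let c := inf [set F i (x0 i + k)%N / (F i (x0 i + k)%N + S) | k in [set: nat]] in
  0 < c /\
  ((\prod_(j < A | j != i)
       expR (- (F j (x0 j) * tail_inv_sum (F i) (x0 i))))%:E
     <= P (tMon X i))%E /\
  (P (tMon X i)
     <= (\prod_(j < A | j != i)
           expR (- (c * F j (x0 j) * tail_inv_sum (F i) (x0 i))))%:E)%E.
Proof.
move=> S c.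
have S_ge0 : 0 <= S by rewrite sumr_ge0 // => j _; rewrite ltW ?hF.
pose h k := F i (x0 i + k)%N.
have h_gt0 k : 0 < h k by rewrite hF // addn_gt0 hx0.
set tail := tail_inv_sum (F i) (x0 i).
have prod_expRE a :
    \prod_(j < A | j != i) expR (- (a * F j (x0 j) * tail)) = expR (- (a * S * tail)).
  by rewrite -expR_sum sumrN /S mulr_sumr mulr_suml.
split; first exact: inf_ratio_gt0 h_gt0 S_ge0 (inv_le_tail_inv_sum (hx0 i) (hF i) hM).
split.
  have -> : \prod_(j < A | j != i) expR (- (F j (x0 j) * tail)) = expR (- (S * tail)).
    by rewrite -[S]mul1r -prod_expRE; apply: eq_bigr => j _; rewrite mul1r.
  apply: (prod_le_prob_tMon hX) => n.
  apply: le_trans (expR_le_prod_ratio h_gt0 S_ge0 n).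
  by rewrite ler_expR lerN2 ler_wpM2l // (partial_le_tail_inv_sum (hx0 i) (hF i) hM).
have upper_cvg : (fun n => expR (- (c * S * \sum_(m < n) (h m)^-1))) @ \oo
    --> expR (- (c * S * tail)).
  apply: (@continuous_cvg _ _ _ _ _ (fun n => - (c * S * \sum_(m < n) (h m)^-1)) expR).
    exact: continuous_expR.
  by apply: cvgN; apply: cvgMl_tmp; exact: (partial_cvg_tail_inv_sum (hx0 i) (hF i) hM).
rewrite prod_expRE; apply: le_lim_EFin upper_cvg _ => n.
apply: le_trans (prob_tMon_le_prod i hF hx0 hX n) _; rewrite lee_fin.
exact: prod_ratio_le_expR h_gt0 S_ge0 _ _ (inf_ratio_le h_gt0 S_ge0).
Qed.
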